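(* In the MHAV setting described in the context, with $Y$, $f$, $\Lambda$ and $\phi_Y$ fixed, the diameter $D$ of $\bar P_{\mathrm{MH}}$ does not depend on the parameters $\alpha'\in(0,1)$ and $\alpha,\beta\in(0,1)$ with $\alpha+\beta<1$.
   Context: MHAV setting: $Y$ is a finite nonempty set, $f:Y\to\mathbb{R}$; $\Lambda=\{\lambda_1<\dots<\lambda_n\}$ positive reals, $n\ge2$; $\bar\Pi(\lambda,y)=\lambda^{-f(y)}/Z$ on $\Lambda\times Y$, $Z=\sum_{\lambda,y}\lambda^{-f(y)}$. $\phi_Y$ is an irreducible Markov kernel on $Y$. For $\alpha'\in(0,1)$: $\phi_\Lambda(\lambda_1,\lambda_2)=1$, $\phi_\Lambda(\lambda_n,\lambda_{n-1})=1$, and for $1<i<n$, $\phi_\Lambda(\lambda_i,\lambda_{i+1})=\alpha'$, $\phi_\Lambda(\lambda_i,\lambda_{i-1})=1-\alpha'$, other entries $0$. $\bar\phi[(\lambda,y),(\lambda',y')]=\alpha\phi_\Lambda(\lambda,\lambda')$ if $\lambda\ne\lambda',y=y'$; $\beta\phi_Y(y,y')$ if $\lambda=\lambda',y\ne y'$; $(1-\alpha-\beta)+\beta\phi_Y(y,y)$ if $(\lambda,y)=(\lambda',y')$; $0$ otherwise. $\bar{\mathsf{Acc}}(x,x')=\min\{1,\frac{\bar\phi(x',x)\bar\Pi(x')}{\bar\phi(x,x')\bar\Pi(x)}\}$; $\bar P_{\mathrm{MH}}(x,x')=\bar\phi(x,x')\bar{\mathsf{Acc}}(x,x')$ for $x\ne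 x'$, $\bar P_{\mathrm{MH}}(x,x)=1-\sum_{x'\ne x}\bar P_{\mathrm{MH}}(x,x')$. The diameter is $D=\min\{l:\ \bar P^l_{\mathrm{MH}}(x,x')>0\text{ for all }x,x'\in\Lambda\times Y\}$ (with $\bar P^l_{\mathrm{MH}}$ the $l$-step transition probabilities), understood as $+\infty$ if the set is empty. *)

From HB Require Import structures.
From mathcomp Require Import all_boot all_order all_algebra.
From mathcomp Require Import reals exp.
From Stdlib Require Import ClassicalEpsilon.
Set Implicit Arguments. Unset Strict Implicit. Unset Printing Implicit Defensive.
Import Order.TTheory GRing.Theory Num.Theory.
Local Open Scope ring_scope.

Section MHAV.
Variable R : realType.

Fixpoint kpow (X : finType) (P : X -> X -> R) (l : nat) (x x' : X) : R :=
  match l with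
  | 0 => (x == x')%:R
  | l.+1 => \sum_(z : X) kpow P l x z * P z x'
  end.

Definition markov_kernel (X : finType) (P : X -> X -> R) : Prop :=
  (forall x x', 0 <= P x x') /\ (forall x, \sum_(x' : X) P x x' = 1).

Definition irreducible (X : finType) (P : X -> X -> R) : Prop :=
  forall x x', exists l, 0 < kpow P l x x'.

(* diameter: least l such that all l-step probabilities are positive;
   None stands for +infinity (no such l). *)
Definition all_pos (X : finType) (P : X -> X -> R) (l : nat) : bool :=
  [forall x, [forall x', 0 < kpow P l x x']].

Definition diameter (X : finType) (P : X -> X -> R) : option nat :=
  match excluded_middle_informative (exists l, all_pos P l) with
  | left H => Some (ex_minn H)
  | right _ => None
  end.

(* Lambda = {lam_0 < ... < lam_{n-1}}, indexed by 'I_n *)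
Definition phiL (n : nat) (a' : R) (i j : 'I_n) : R :=
  if (i == 0%N :> nat) then ((j == 1%N :> nat)%:R)
  else if (i == n.-1 :> nat) then ((j == n.-2 :> nat)%:R)
  else if (j == i.+1 :> nat) then a'
  else if (j.+1 == i :> nat) then 1 - a'
  else 0.

Variables (Y : finType) (f : Y -> R) (n : nat) (lam : 'I_n -> R)
          (phiY : Y -> Y -> R).

Definition Zc : R := \sum_(i : 'I_n) \sum_(y : Y) powR (lam i) (- f y).

Definition Pibar (x : 'I_n * Y) : R := powR (lam x.1) (- f x.2) / Zc.

Definition phibar (a' al be : R) (x x' : 'I_n * Y) : R :=
  if (x.1 != x'.1) && (x.2 == x'.2) then al * phiL a' x.1 x'.1
  else if (x.1 == x'.1) && (x.2 != x'.2) then be * phiY x.2 x'.2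
  else if x == x' then (1 - al - be) + be * phiY x.2 x.2
  else 0.

Definition Acc (a' al be : R) (x x' : 'I_n * Y) : R :=
  Num.min 1 ((phibar a' al be x' x * Pibar x') / (phibar a' al be x x' * Pibar x)).

Definition PMH (a' al be : R) (x x' : 'I_n * Y) : R :=
  if x != x' then phibar a' al be x x' * Acc a' al be x x'
  else 1 - \sum_(z : 'I_n * Y | z != x) phibar a' al be x z * Acc a' al be x z.

End MHAV.

From HB Require Import structures.
From mathcomp Require Import all_boot all_order all_algebra.
From mathcomp Require Import reals exp zify.
From Stdlib Require Import FunctionalExtensionality.
(* The diameter of a kernel only depends on its support, i.e. on which one-step
   probabilities are positive, since the same holds for every power of a nonnegative
   kernel.  For the MHAV chain this support does not depend on alpha', alpha, beta:
   a move x -> x' (x <> x') has positive probability iff both proposals x -> x' and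
   x' -> x are possible, the proposal being a move to a neighbouring temperature or a
   phi_Y-step in Y; and every diagonal entry is positive because the proposal puts
   mass at most alpha + beta < 1 off the diagonal. *)

Set Implicit Arguments. Unset Strict Implicit. Unset Printing Implicit Defensive.
Import Order.TTheory GRing.Theory Num.Theory.
Local Open Scope ring_scope.

Section KernelSupport.
Variables (R : realType) (X : finType).
Implicit Types P Q : X -> X -> R.

Lemma kpow_ge0 P : (forall x y, 0 <= P x y) -> forall l x y, 0 <= kpow P l x y.
Proof.
move=> P_ge0; elim=> [|l IHl] x y /=; first exact: ler0n.
by apply: sumr_ge0 => z _; rewrite mulr_ge0.
Qed.

Lemma kpow_gt0_support P Q :
    (forall x y, 0 <= P x y) -> (forall x y, 0 <= Q x y) ->
    (forall x y, (0 < P x y) = (0 < Q x y)) ->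
  forall l x y, (0 < kpow P l x y) = (0 < kpow Q l x y).
Proof.
move=> P_ge0 Q_ge0 PQ; elim=> [//|l IHl] x y /=.
have PPge0 z : 0 <= kpow P l x z * P z y by rewrite mulr_ge0 ?kpow_ge0.
have QQge0 z : 0 <= kpow Q l x z * Q z y by rewrite mulr_ge0 ?kpow_ge0.
rewrite !lt0r !sumr_ge0 // !andbT !psumr_neq0 //; apply: eq_has => z /=.
by rewrite !mulr_ge0_gt0 ?kpow_ge0 // IHl PQ.
Qed.

Lemma diameter_support P Q :
    (forall x y, 0 <= P x y) -> (forall x y, 0 <= Q x y) ->
    (forall x y, (0 < P x y) = (0 < Q x y)) ->
  diameter P = diameter Q.
Proof.
move=> P_ge0 Q_ge0 PQ; rewrite /diameter; suff -> : all_pos P = all_pos Q by [].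
apply: functional_extensionality => l.
by apply/eq_forallb => x; apply/eq_forallb => y; rewrite (kpow_gt0_support P_ge0 Q_ge0 PQ).
Qed.

End KernelSupport.

Lemma sum_ord_eq_le1 (R : numDomainType) (n k : nat) :
  \sum_(j < n) (((j : nat) == k)%:R : R) <= 1.
Proof.
case: (ltnP k n) => [kn | nk].
  rewrite (bigD1 (Ordinal kn)) //= eqxx big1 ?addr0 // => j.
  by rewrite -val_eqE /= => /negbTE ->.
by rewrite big1 ?ler01 // => j _; rewrite ltn_eqF // (leq_trans (ltn_ord j)).
Qed.

Section Lambda.
Variables (R : realType) (n : nat) (a : R).
Hypotheses (a_gt0 : 0 < a) (a_lt1 : a < 1).

Definition lam_adj (i j : 'I_n) : bool := (i.+1 == j) || (j.+1 == i).

Lemma phiL_gt0 (i j : 'I_n) : (0 < phiL a i j) = lam_adj i j.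
Proof.
have := ltn_ord i; have := ltn_ord j; rewrite /phiL /lam_adj.
case: i j => [i /= _] [j /= _] jn in_.
case: ifP => [/eqP-> | i0]; first by rewrite ltr0n lt0b orbF eq_sym.
case: ifP => [/eqP ni | _].
  have -> : (j == n.-2) = (j.+1 == i) by apply/eqP/eqP; lia.
  by rewrite ltr0n; case: (i.+1 == j) /eqP; [lia | case: (j.+1 == i)].
case: ifP => [/eqP->|ji]; first by rewrite a_gt0 eqxx.
by rewrite (eq_sym i.+1) ji; case: ifP => _; rewrite ?subr_gt0 ?ltxx.
Qed.

Lemma phiL_ge0 (i j : 'I_n) : 0 <= phiL a i j.
Proof. by rewrite /phiL; repeat case: ifP => _; rewrite ?ler0n ?subr_ge0 // ltW. Qed.

Lemma phiL_row_le1 (i : 'I_n) : \sum_j phiL a i j <= 1.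
Proof.
rewrite /phiL; case i0: ((i : nat) == 0%N); first exact: sum_ord_eq_le1.
case: ((i : nat) == n.-1); first exact: sum_ord_eq_le1.
pose ind k (j : 'I_n) : R := ((j : nat) == k)%:R.
rewrite (eq_bigr (fun j => a * ind i.+1 j + (1 - a) * ind i.-1 j)); last first.
  move=> j _; rewrite /ind.
  have -> : ((j : nat) == i.-1) = (j.+1 == i) by apply/eqP/eqP; move/negbT: i0; lia.
  case: eqP => [ji|_]; case: eqP => [ij|_]; rewrite ?mulr1 ?mulr0 ?addr0 ?add0r //.
  lia.
rewrite big_split -!mulr_sumr.
apply: le_trans (_ : a + (1 - a) <= 1); last by rewrite addrC subrK.
by apply: lerD; rewrite ler_piMr ?subr_ge0 ?sum_ord_eq_le1 // ltW.
Qed.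

End Lambda.

Section MetropolisHastingsSupport.
Variables (R : realType) (Y : finType) (f : Y -> R) (n : nat) (lam : 'I_n -> R)
  (phiY : Y -> Y -> R) (a al be : R).
Hypotheses (Y_gt0 : (0 < #|Y|)%N) (n_gt0 : (0 < n)%N) (lam_gt0 : forall i, 0 < lam i).
Hypotheses (phiY_ge0 : forall y y', 0 <= phiY y y')
  (phiY_sum1 : forall y, \sum_y' phiY y y' = 1).
Hypotheses (a_gt0 : 0 < a) (a_lt1 : a < 1) (al_gt0 : 0 < al) (be_gt0 : 0 < be)
  (albe_lt1 : al + be < 1).

Let al_ge0 : 0 <= al := ltW al_gt0.
Let be_ge0 : 0 <= be := ltW be_gt0.

Local Notation phib := (@phibar R Y n phiY a al be).
Local Notation Acc := (Acc f lam phiY a al be).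
Local Notation PMH := (PMH f lam phiY a al be).
Implicit Types x z : 'I_n * Y.

Definition mh_edge (x x' : 'I_n * Y) : bool :=
  ((x.2 == x'.2) && lam_adj x.1 x'.1) || [&& x.1 == x'.1, x.2 != x'.2 & 0 < phiY x.2 x'.2].

Lemma Zc_gt0 : 0 < Zc f lam.
Proof.
have [y _] := card_gt0P Y_gt0.
have S_ge0 (P : pred Y) i : 0 <= \sum_(y' | P y') powR (lam i) (- f y').
  by apply: sumr_ge0 => *; exact: powR_ge0.
rewrite /Zc (bigD1 (Ordinal n_gt0)) //= (bigD1 y) //=.
apply: ltr_wpDr; first by apply: sumr_ge0 => i _; apply: S_ge0.
by apply: ltr_wpDr; [exact: S_ge0 | exact: powR_gt0].
Qed.

Lemma Pibar_gt0 x : 0 < Pibar f lam x.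
Proof. by rewrite divr_gt0 ?powR_gt0 ?Zc_gt0. Qed.

Lemma phibar_ge0 x x' : 0 <= phib x x'.
Proof.
rewrite /phibar; repeat case: ifP => _; rewrite ?mulr_ge0 ?phiL_ge0 ?phiY_ge0 //.
by rewrite addr_ge0 ?mulr_ge0 // -addrA -opprD subr_ge0 ltW.
Qed.

Lemma phibar_gt0 x x' : x != x' -> (0 < phib x x') = mh_edge x x'.
Proof.
move: x x' => [i y] [j w]; rewrite /phibar /mh_edge /= xpair_eqE => /negbTE ->.
case: (i =P j) => [<-|/eqP ij]; case: (y =P w) => [<-|/eqP yw] //=.
- by rewrite ltxx /lam_adj gtn_eqF.
- by rewrite pmulr_rgt0.
- by rewrite pmulr_rgt0 // phiL_gt0 ?orbF.
Qed.

Lemma phibar_offdiag x z : z != x ->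
  phib x z = (if z.2 == x.2 then al * phiL a x.1 z.1 else 0)
           + (if z.1 == x.1 then be * phiY x.2 z.2 else 0).
Proof.
move: x z => [i y] [j w]; rewrite /phibar /= !xpair_eqE (eq_sym j) (eq_sym w).
by case: (i == j); case: (y == w); rewrite //= ?addr0 ?add0r.
Qed.

Lemma sum_phibar_offdiag_le x : \sum_(z | z != x) phib x z <= al + be.
Proof.
pose g z := (if z.2 == x.2 then al * phiL a x.1 z.1 else 0)
          + (if z.1 == x.1 then be * phiY x.2 z.2 else 0).
have g_ge0 z : 0 <= g z.
  by apply: addr_ge0; case: ifP => _; rewrite ?mulr_ge0 ?phiL_ge0 ?phiY_ge0.
apply: (@le_trans _ _ (\sum_z g z)).
  rewrite [leLHS]big_mkcond; apply: ler_sum => z _.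
  by case: ifP => [zx|_]; rewrite ?phibar_offdiag.
rewrite -(pair_bigA _ (fun i w => g (i, w))) /g /=.
under eq_bigr => i _ do rewrite big_split /=.
rewrite big_split /= [X in _ + X]exchange_big /=.
under eq_bigr => i _ do rewrite -big_mkcond /= big_pred1_eq.
under [X in _ + X]eq_bigr => w _ do rewrite -big_mkcond /= big_pred1_eq.
rewrite -!mulr_sumr phiY_sum1 mulr1 lerD2r.
by rewrite ler_piMr ?phiL_row_le1.
Qed.

Lemma Acc_ge0 x x' : 0 <= Acc x x'.
Proof.
have Pibar_ge0 z : 0 <= Pibar f lam z by exact/ltW/Pibar_gt0.
by rewrite /Acc le_min ler01; apply: divr_ge0; apply: mulr_ge0; rewrite ?phibar_ge0 ?Pibar_ge0.
Qed.

Lemma Acc_le1 x x' : Acc x x' <= 1.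
Proof. by rewrite /Acc ge_min lexx. Qed.

Lemma Acc_gt0 x x' : 0 < phib x x' -> (0 < Acc x x') = (0 < phib x' x).
Proof.
move=> phib_gt0; rewrite /Acc lt_min ltr01 /= pmulr_lgt0.
  by rewrite pmulr_lgt0 //; exact: Pibar_gt0.
by rewrite invr_gt0 mulr_gt0 //; exact: Pibar_gt0.
Qed.

Lemma PMH_diag_gt0 x : 0 < PMH x x.
Proof.
rewrite /PMH eqxx /= subr_gt0; apply: le_lt_trans albe_lt1.
apply: le_trans (sum_phibar_offdiag_le x).
by apply: ler_sum => z _; rewrite ler_piMr ?phibar_ge0 ?Acc_le1.
Qed.

Lemma PMH_offdiag_gt0 x x' : x != x' ->
  (0 < PMH x x') = mh_edge x x' && mh_edge x' x.
Proof.
move=> xx'; have x'x : x' != x by rewrite eq_sym.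
rewrite /PMH xx' mulr_ge0_gt0 ?phibar_ge0 ?Acc_ge0 // -!phibar_gt0 //.
by case: (ltrP 0 (phib x x')) => // /Acc_gt0 ->.
Qed.

Lemma PMH_gt0 x x' : (0 < PMH x x') = (x == x') || mh_edge x x' && mh_edge x' x.
Proof. by case: eqVneq => [<-|xx']; rewrite ?PMH_diag_gt0 ?PMH_offdiag_gt0. Qed.

Lemma PMH_ge0 x x' : 0 <= PMH x x'.
Proof.
case: (eqVneq x x') => [<-|xx']; first exact/ltW/PMH_diag_gt0.
by rewrite /PMH xx' mulr_ge0 ?phibar_ge0 ?Acc_ge0.
Qed.

End MetropolisHastingsSupport.

Theorem lemma17 (R : realType) (Y : finType) (f : Y -> R) (n : nat)
  (lam : 'I_n -> R) (phiY : Y -> Y -> R) :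
  (0 < #|Y|)%N -> (2 <= n)%N ->
  (forall i, 0 < lam i) -> (forall i j : 'I_n, (i < j)%N -> lam i < lam j) ->
  markov_kernel phiY -> irreducible phiY ->
  forall a1' al1 be1 a2' al2 be2 : R,
    0 < a1' < 1 -> 0 < al1 < 1 -> 0 < be1 < 1 -> al1 + be1 < 1 ->
    0 < a2' < 1 -> 0 < al2 < 1 -> 0 < be2 < 1 -> al2 + be2 < 1 ->
    diameter (PMH f lam phiY a1' al1 be1) = diameter (PMH f lam phiY a2' al2 be2).
Proof.
move=> Y_gt0 n_ge2 lam_gt0 _ [phiY_ge0 phiY_sum1] _ a1 al1 be1 a2 al2 be2
  /andP[a1_gt0 a1_lt1] /andP[al1_gt0 _] /andP[be1_gt0 _] albe1
  /andP[a2_gt0 a2_lt1] /andP[al2_gt0 _] /andP[be2_gt0 _] albe2.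
have n_gt0 : (0 < n)%N by apply: leq_trans n_ge2.
by apply: diameter_support => [x x'|x x'|x x']; rewrite ?PMH_ge0 ?PMH_gt0.
Qed.
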